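(* The time evolution commutes with unbasketing: for every state $S=(S_i)_{i\in\mathbb Z}$ of the box-basket-ball system, choosing an index $i_0$ such that $S_i=V$ and $(T_\infty S)_i=V$ for all $i\le i_0$ and anchoring both unbasketings so that site $i_0$ is sent to cell $0$, one has $\mathrm{Unb}(T_\infty(S))=T_{BBS}(\mathrm{Unb}(S))$.
   Context: Box-basket-ball system (BBBS). A site state is a triple $(a,b,c)$ of nonnegative integers with $a=b-c+1$ (one box, $b$ baskets, $c$ balls; each box/basket holds at most one ball, balls placed in the box first). $V=(1,0,0)$. A state is a sequence $(S_i)_{i\in\mathbb Z}$ of site states with $S_i=V$ for all but finitely many $i$. The time evolution $T_\infty$: first every empty basket (there are $\min(a_i,b_i)$ at site $i$) is moved from site $i$ to site $i+1$, full baskets staying; then the balls are taken one at a time from left to right, and each is moved to the nearest currently unoccupied box or basket at a site strictly to its right (each ball moves exactly once). Box-ball system (BBS): a state is a $\{0,1\}$-valued sequence indexed by $\mathbb Z$ (cells; $1$ = ball) with finitely many $1$'s; its time evolution $T_{BBS}$ takes the balls one at a time from left to right and moves each to the nearest currently empty cell to its right. Unbasketing $\mathrm{Unb}$: each site $(a,b,c)$ is replaced by $b+1$ consecutive cells of the box-ball system, the first $c$ of which contain a ball; doing this for all sites in order gives a box-ball state (determined once one fixes which cell a given site starts at). *)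

From Stdlib Require Import ZArith List ClassicalEpsilon.
Open Scope Z_scope.

(** A site state (a,b,c): a = #boxes-slot availability, b baskets, c balls.
    The constraint a = b - c + 1 with a,b,c >= 0 is  a + c = b + 1  in nat. *)
Record site := mkSite { sa : nat; sb : nat; sc : nat }.

Definition valid_site (s : site) : Prop := (sa s + sc s = sb s + 1)%nat.

Definition V : site := mkSite 1 0 0.

Definition is_state (S : Z -> site) : Prop :=
  (forall i, valid_site (S i)) /\ exists N : Z, forall i, N < Z.abs i -> S i = V.

Definition upd {A} (f : Z -> A) (k : Z) (v : A) : Z -> A :=
  fun x => if Z.eqb x k then v else f x.

Fixpoint find_from (p : Z -> bool) (lo : Z) (fuel : nat) : option Z :=
  match fuel with
  | O => None
  | S f => if p lo then Some lo else find_from p (lo + 1) f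
  end.

Definition sites (L R : Z) : list Z :=
  map (fun n => L + Z.of_nat n) (seq 0 (Z.to_nat (R - L + 1))).

Definition empty_baskets (s : site) : nat := Nat.min (sa s) (sb s).

Definition baskets_after (S : Z -> site) (k : Z) : nat :=
  (sb (S k) - empty_baskets (S k) + empty_baskets (S (k - 1)%Z))%nat.

(** capacity (box + baskets) at site k after the basket move *)
Definition cap_after (S : Z -> site) (k : Z) : nat := Datatypes.S (baskets_after S k).

(** The search bound [fuel] is
    chosen (below) large enough that a free slot is always found. *)
Definition move_ball_inf (S : Z -> site) (fuel : nat) (count : Z -> nat) (j : Z)
  : Z -> nat :=
  let count1 := upd count j (pred (count j)) in
  match find_from (fun k => Nat.ltb (count1 k) (cap_after S k)) (j + 1) fuel with
  | Some k => upd count1 k (Datatypes.S (count1 k))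
  | None => count1
  end.

Definition Tinf_w (L R : Z) (S : Z -> site) : Z -> site :=
  let nb := fold_right (fun j acc => (sc (S j) + acc)%nat) O (sites L R) in
  let fuel := (Z.to_nat (R - L) + 2 + nb)%nat in
  let count0 := fun k => sc (S k) in
  let count := fold_left
       (fun cnt j => Nat.iter (sc (S j)) (fun c => move_ball_inf S fuel c j) cnt)
       (sites L R) count0 in
  fun k => mkSite (baskets_after S k + 1 - count k) (baskets_after S k) (count k).

Definition bbbs_window (S : Z -> site) : Z * Z :=
  epsilon (inhabits (0, 0))
    (fun w => forall i, i < fst w \/ snd w < i -> S i = V).

Definition Tinf (S : Z -> site) : Z -> site :=
  Tinf_w (fst (bbbs_window S)) (snd (bbbs_window S)) S.

Definition is_bbs (B : Z -> bool) : Prop :=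
  exists L R : Z, forall x, B x = true -> L <= x <= R.

Definition TBBS_w (L R : Z) (B : Z -> bool) : Z -> bool :=
  let nb := length (filter B (sites L R)) in
  let fuel := (Z.to_nat (R - L) + 2 + nb)%nat in
  fold_left
    (fun cfg x =>
       if B x then
         let cfg1 := upd cfg x false in
         match find_from (fun y => negb (cfg1 y)) (x + 1) fuel with
         | Some y => upd cfg1 y true
         | None => cfg1
         end
       else cfg)
    (sites L R) B.

Definition bbs_window (B : Z -> bool) : Z * Z :=
  epsilon (inhabits (0, 0))
    (fun w => forall x, B x = true -> fst w <= x <= snd w).

Definition TBBS (B : Z -> bool) : Z -> bool :=
  TBBS_w (fst (bbs_window B)) (snd (bbs_window B)) B.

(** cell number n (counting from 0) among the cells of sites i, i+1, ... *)
Fixpoint unb_r (fuel : nat) (S : Z -> site) (i : Z) (n : nat) : bool :=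
  match fuel with
  | O => false
  | Datatypes.S f =>
      if Nat.ltb n (sb (S i) + 1) then Nat.ltb n (sc (S i))
      else unb_r f S (i + 1) (n - (sb (S i) + 1))
  end.

(** cell number n counting leftwards from the last cell of site i, among the
    cells of sites i, i-1, ... *)
Fixpoint unb_l (fuel : nat) (S : Z -> site) (i : Z) (n : nat) : bool :=
  match fuel with
  | O => false
  | Datatypes.S f =>
      if Nat.ltb n (sb (S i) + 1) then Nat.ltb (sb (S i) - n) (sc (S i))
      else unb_l f S (i - 1) (n - (sb (S i) + 1))
  end.

(** Unb anchored so that the first cell of site i0 is cell 0: site (a,b,c)
    becomes b+1 consecutive cells, the first c of which hold a ball. *)
Definition Unb (i0 : Z) (S : Z -> site) : Z -> bool :=
  fun x =>
    if Z.leb 0 x then unb_r (Datatypes.S (Z.to_nat x)) S i0 (Z.to_nat x)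
    else unb_l (Datatypes.S (Z.to_nat (- x - 1))) S (i0 - 1) (Z.to_nat (- x - 1)).

(* Both dynamics are instances of one sweep: sites have capacities, the balls
   of each site leave one at a time from left to right, and each takes the
   nearest free slot to its right.  The result of a sweep has a closed form:
   the number of balls crossing into a site follows a carry recursion, and a
   site keeps min(free slots, arriving balls) of them.  For the box-ball system
   every cell has capacity 1.  Read in Unb(S), the cells of site k of T(S)
   are the baskets that came from site k-1 (empty), then the balls of site k,
   then its box if it is empty; pushing the box-ball carry through such a block
   reproduces the box-basket-ball carry at site k, and the balls kept by the
   block fill its first cells, which is how Unb(T(S)) shows site k. *)

From Stdlib Require Import ZArith Lia List FunctionalExtensionality ClassicalEpsilon.
Open Scope Z_scope.

Lemma find_from_first (p : Z -> bool) (lo : Z) (fuel d : nat) :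
  (d < fuel)%nat ->
  (forall d', (d' < d)%nat -> p (lo + Z.of_nat d') = false) ->
  p (lo + Z.of_nat d) = true ->
  find_from p lo fuel = Some (lo + Z.of_nat d).
Proof.
  revert lo d; induction fuel as [|fuel IH]; intros lo d Hd Hbefore Hp; [lia|].
  simpl. destruct d as [|d].
  - rewrite Z.add_0_r in Hp. now rewrite Hp, Z.add_0_r.
  - specialize (Hbefore 0%nat ltac:(lia)) as Hlo. rewrite Z.add_0_r in Hlo. rewrite Hlo.
    replace (lo + Z.of_nat (S d)) with (lo + 1 + Z.of_nat d) in * by lia.
    apply IH; [lia| |assumption].
    intros d' Hd'. replace (lo + 1 + Z.of_nat d') with (lo + Z.of_nat (S d')) by lia.
    apply Hbefore; lia.
Qed.

Lemma find_from_true (p : Z -> bool) lo fuel k :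
  find_from p lo fuel = Some k -> p k = true.
Proof.
  revert lo; induction fuel as [|fuel IH]; simpl; intros lo H; [discriminate|].
  destruct (p lo) eqn:E; [now injection H as <-|eauto].
Qed.

Section Sweep.
Variables (c cap : Z -> nat).

(* Balls arriving at site j from the left find [free j] open slots: the balls
   of site j itself are moved only after every ball to its left. *)
Definition free (j : Z) : nat := (cap j - c j)%nat.

Definition move_ball (fuel : nat) (count : Z -> nat) (j : Z) : Z -> nat :=
  let count1 := upd count j (pred (count j)) in
  match find_from (fun k => Nat.ltb (count1 k) (cap k)) (j + 1) fuel with
  | Some k => upd count1 k (S (count1 k))
  | None => count1
  end.

Definition sweep (fuel : nat) (L R : Z) : Z -> nat :=
  fold_left (fun cnt j => Nat.iter (c j) (fun x => move_ball fuel x j) cnt) (sites L R) c.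

(* [carry L M n]: number of balls crossing into site [L + n] when [M] balls
   cross into site [L] and the sites [L], ..., [L + n - 1] are swept. *)
Fixpoint carry (L : Z) (M n : nat) : nat :=
  match n with
  | O => M
  | S n' => let M' := carry L M n' in
      (M' - Nat.min (free (L + Z.of_nat n')) M' + c (L + Z.of_nat n'))%nat
  end.

Definition settled (L j : Z) : nat := Nat.min (free j) (carry L 0 (Z.to_nat (j - L))).

(* [greedy_fill s m n]: how many of [m] balls crossing into site [s] come to
   rest at site [s + n], each taking the nearest free slot. *)
Fixpoint greedy_fill (s : Z) (m n : nat) : nat :=
  match n with
  | O => Nat.min (free s) m
  | S n' => greedy_fill (s + 1) (m - Nat.min (free s) m) n'
  end.

Fixpoint ball_total (L : Z) (n : nat) : nat :=
  match n with O => O | S n' => (c L + ball_total (L + 1) n')%nat end.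

Lemma ball_total_S L n : ball_total L (S n) = (ball_total L n + c (L + Z.of_nat n))%nat.
Proof.
  revert L; induction n as [|n IH]; intros L; cbn [ball_total] in *.
  - rewrite Z.add_0_r. lia.
  - rewrite IH. replace (L + 1 + Z.of_nat n) with (L + Z.of_nat (S n)) by lia. lia.
Qed.

Lemma ball_total_mono L n m : (n <= m)%nat -> (ball_total L n <= ball_total L m)%nat.
Proof. induction 1; [lia|]. rewrite ball_total_S; lia. Qed.

Lemma carry_le_ball_total L n : (carry L 0 n <= ball_total L n)%nat.
Proof. induction n; [simpl; lia|]. rewrite ball_total_S. simpl. lia. Qed.

Lemma carry_add L M n m : carry L M (n + m) = carry (L + Z.of_nat n) (carry L M n) m.
Proof.
  induction m as [|m IH]; simpl.
  - now rewrite Nat.add_0_r.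
  - rewrite Nat.add_succ_r. simpl. rewrite IH.
    now replace (L + Z.of_nat (n + m)) with (L + Z.of_nat n + Z.of_nat m) by lia.
Qed.

Lemma carry_no_balls L n :
  (forall i, (i < n)%nat -> c (L + Z.of_nat i) = 0%nat) -> carry L 0 n = 0%nat.
Proof.
  induction n as [|n IH]; intros H; simpl; [lia|].
  rewrite IH by (intros; apply H; lia). rewrite H by lia. lia.
Qed.

Lemma greedy_fill_nothing s n : greedy_fill s 0 n = 0%nat.
Proof.
  revert s; induction n as [|n IH]; intros s; simpl; [lia|].
  replace (Nat.min (free s) 0) with 0%nat by lia. apply IH.
Qed.

Lemma greedy_fill_no_balls s M n : (forall j, s <= j -> c j = 0%nat) ->
  greedy_fill s M n = Nat.min (free (s + Z.of_nat n)) (carry s M n).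
Proof.
  revert s M; induction n as [|n IH]; intros s M H.
  - simpl. now rewrite Z.add_0_r.
  - change (greedy_fill s M (S n)) with (greedy_fill (s + 1) (M - Nat.min (free s) M) n).
    rewrite IH by (intros; apply H; lia).
    replace (S n) with (1 + n)%nat by lia. rewrite carry_add. cbn [carry].
    rewrite Z.add_0_r, (H s) by lia.
    replace (s + Z.of_nat (1 + n)) with (s + Z.of_nat 1 + Z.of_nat n) by lia.
    f_equal. f_equal. lia.
Qed.

Lemma greedy_fill_succ (Bnd : Z) (HB : forall j, Bnd <= j -> (1 <= free j)%nat) s m :
  exists d, (d <= Z.to_nat (Bnd - s) + m)%nat /\
    (forall d', (d' < d)%nat -> greedy_fill s m d' = free (s + Z.of_nat d')) /\
    (greedy_fill s m d < free (s + Z.of_nat d))%nat /\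
    greedy_fill s (S m) d = S (greedy_fill s m d) /\
    (forall d', d' <> d -> greedy_fill s (S m) d' = greedy_fill s m d').
Proof.
  remember (Z.to_nat (Bnd - s) + m)%nat as N eqn:HN. revert s m HN.
  induction N as [N IH] using lt_wf_ind. intros s m HN.
  destruct (Nat.lt_ge_cases m (free s)) as [Hlt|Hge].
  - exists 0%nat. cbn [greedy_fill]. rewrite Z.add_0_r.
    repeat split; try (intros; lia); try lia.
    intros [|d'] Hd'; [lia|]. cbn [greedy_fill].
    replace (S m - Nat.min (free s) (S m))%nat with 0%nat by lia.
    replace (m - Nat.min (free s) m)%nat with 0%nat by lia. reflexivity.
  - assert (Hdecr : (Z.to_nat (Bnd - (s + 1)) + (m - free s) < N)%nat).
    { destruct (Z_lt_le_dec s Bnd); [lia|]. specialize (HB s ltac:(lia)). lia. }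
    destruct (IH _ Hdecr (s + 1) (m - free s)%nat eq_refl)
      as (d & Hd & Hfull & Hlt & Hsucc & Hother).
    exists (S d).
    assert (E1 : (m - Nat.min (free s) m)%nat = (m - free s)%nat) by lia.
    assert (E2 : (S m - Nat.min (free s) (S m))%nat = S (m - free s)) by lia.
    cbn [greedy_fill]. rewrite E1, E2.
    replace (s + Z.of_nat (S d)) with (s + 1 + Z.of_nat d) by lia.
    repeat split; try assumption.
    + destruct (Z_lt_le_dec s Bnd); [lia|]. specialize (HB s ltac:(lia)). lia.
    + intros [|d'] Hd'; cbn [greedy_fill].
      * rewrite Z.add_0_r. lia.
      * rewrite E1, Hfull by lia. f_equal. lia.
    + intros [|d'] Hd'; cbn [greedy_fill]; [lia|].
      rewrite E1, E2. apply Hother. lia.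
Qed.

Hypothesis cap_ge_balls : forall j, (c j <= cap j)%nat.
Hypothesis cap_pos : forall j, (1 <= cap j)%nat.
Variables (L R : Z) (fuel : nat).
Hypothesis no_balls_outside : forall j, j < L \/ R < j -> c j = 0%nat.
Hypothesis enough_fuel : (Z.to_nat (R - L) + 2 + ball_total L (Z.to_nat (R - L + 1)) <= fuel)%nat.

(* The counts once [t] balls of site [k] have been moved, [M] balls having
   crossed into [k] from the left. *)
Definition sweep_state (k : Z) (M t : nat) : Z -> nat := fun j =>
  if j <? L then c j
  else if j <? k then settled L j
  else if j =? k then (c k - t + Nat.min (free k) M)%nat
  else (c j + greedy_fill (k + 1) (M - Nat.min (free k) M + t) (Z.to_nat (j - k - 1)))%nat.

Lemma sweep_state_ahead k M t d : L <= k ->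
  sweep_state k M t (k + 1 + Z.of_nat d)
  = (c (k + 1 + Z.of_nat d) + greedy_fill (k + 1) (M - Nat.min (free k) M + t) d)%nat.
Proof.
  intros Hk. unfold sweep_state.
  destruct (Z.ltb_spec (k + 1 + Z.of_nat d) L); [lia|].
  destruct (Z.ltb_spec (k + 1 + Z.of_nat d) k); [lia|].
  destruct (Z.eqb_spec (k + 1 + Z.of_nat d) k); [lia|].
  do 3 f_equal. lia.
Qed.

Lemma free_beyond_window j : R < j -> (1 <= free j)%nat.
Proof. intros. unfold free. rewrite no_balls_outside by lia. specialize (cap_pos j). lia. Qed.

Lemma move_ball_sweep_state n t : (n < Z.to_nat (R - L + 1))%nat ->
  (t < c (L + Z.of_nat n))%nat ->
  move_ball fuel (sweep_state (L + Z.of_nat n) (carry L 0 n) t) (L + Z.of_nat n)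
  = sweep_state (L + Z.of_nat n) (carry L 0 n) (S t).
Proof.
  intros Hn Ht. set (k := L + Z.of_nat n) in *. set (M := carry L 0 n).
  set (m := (M - Nat.min (free k) M + t)%nat).
  assert (Hk : L <= k) by (unfold k; lia).
  assert (Hm : (m + 1 <= ball_total L (Z.to_nat (R - L + 1)))%nat).
  { pose proof (carry_le_ball_total L n).
    pose proof (ball_total_mono L (S n) (Z.to_nat (R - L + 1)) Hn) as Hmono.
    rewrite ball_total_S in Hmono. unfold m, M. fold k in Hmono. lia. }
  destruct (greedy_fill_succ (R + 1) (fun j Hj => free_beyond_window j ltac:(lia)) (k + 1) m)
    as (d & Hd & Hfull & Hlt & Hsucc & Hother).
  assert (Hm1 : (M - Nat.min (free k) M + S t)%nat = S m) by (unfold m; lia).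
  unfold move_ball.
  rewrite (find_from_first _ (k + 1) fuel d).
  - apply functional_extensionality. intros j. unfold upd.
    destruct (Z.eqb_spec j (k + 1 + Z.of_nat d)) as [->|Ej].
    + destruct (Z.eqb_spec (k + 1 + Z.of_nat d) k); [lia|].
      rewrite !sweep_state_ahead, Hm1, Hsucc by lia. fold m. lia.
    + unfold sweep_state.
      destruct (Z.eqb_spec j k) as [->|Ek].
      * rewrite Z.eqb_refl. destruct (Z.ltb_spec k L); [lia|].
        destruct (Z.ltb_spec k k); [lia|lia].
      * destruct (Z.ltb_spec j L); [reflexivity|].
        destruct (Z.ltb_spec j k); [reflexivity|].
        rewrite Hm1, Hother by lia. reflexivity.
  - lia.
  - intros d' Hd'. unfold upd. destruct (Z.eqb_spec (k + 1 + Z.of_nat d') k); [lia|].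
    rewrite sweep_state_ahead by lia. fold m. rewrite Hfull by lia. apply Nat.ltb_ge.
    unfold free. specialize (cap_ge_balls (k + 1 + Z.of_nat d')). lia.
  - unfold upd. destruct (Z.eqb_spec (k + 1 + Z.of_nat d) k); [lia|].
    rewrite sweep_state_ahead by lia. fold m. apply Nat.ltb_lt. unfold free in Hlt. lia.
Qed.

Lemma sweep_site n : (n < Z.to_nat (R - L + 1))%nat ->
  Nat.iter (c (L + Z.of_nat n)) (fun x => move_ball fuel x (L + Z.of_nat n))
    (sweep_state (L + Z.of_nat n) (carry L 0 n) 0)
  = sweep_state (L + Z.of_nat (S n)) (carry L 0 (S n)) 0.
Proof.
  intros Hn. set (k := L + Z.of_nat n).
  transitivity (sweep_state k (carry L 0 n) (c k)).
  { assert (Hiter : forall t, (t <= c k)%nat ->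
      Nat.iter t (fun x => move_ball fuel x k) (sweep_state k (carry L 0 n) 0)
      = sweep_state k (carry L 0 n) t).
    { induction t as [|t IH]; intros Ht; [reflexivity|].
      simpl. rewrite IH by lia. apply move_ball_sweep_state; unfold k in *; lia. }
    apply Hiter. lia. }
  apply functional_extensionality; intros j. unfold sweep_state.
  replace (L + Z.of_nat (S n)) with (k + 1) by (unfold k; lia).
  assert (HM : carry L 0 (S n) = (carry L 0 n - Nat.min (free k) (carry L 0 n) + c k)%nat)
    by reflexivity.
  destruct (Z.ltb_spec j L); [reflexivity|].
  destruct (Z.ltb_spec j k).
  { destruct (Z.ltb_spec j (k + 1)); [reflexivity|lia]. }
  destruct (Z.eqb_spec j k) as [->|].
  { destruct (Z.ltb_spec k (k + 1)); [|lia]. unfold settled.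
    replace (Z.to_nat (k - L)) with n by (unfold k; lia). lia. }
  destruct (Z.ltb_spec j (k + 1)); [lia|].
  destruct (Z.eqb_spec j (k + 1)) as [->|].
  { replace (Z.to_nat (k + 1 - k - 1)) with 0%nat by lia. cbn [greedy_fill]. rewrite HM. lia. }
  replace (Z.to_nat (j - k - 1)) with (S (Z.to_nat (j - (k + 1) - 1))) by lia.
  cbn [greedy_fill]. rewrite HM, Nat.add_0_r. reflexivity.
Qed.

Lemma sweep_prefix n : (n <= Z.to_nat (R - L + 1))%nat ->
  fold_left (fun cnt j => Nat.iter (c j) (fun x => move_ball fuel x j) cnt)
    (map (fun m => L + Z.of_nat m) (seq 0 n)) c
  = sweep_state (L + Z.of_nat n) (carry L 0 n) 0.
Proof.
  induction n as [|n IH]; intros Hn.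
  - apply functional_extensionality; intros j. unfold sweep_state. simpl.
    rewrite Z.add_0_r.
    destruct (Z.ltb_spec j L); [reflexivity|]. destruct (Z.ltb_spec j L); [lia|].
    destruct (Z.eqb_spec j L) as [->|]; [lia|]. rewrite greedy_fill_nothing. lia.
  - rewrite seq_S, map_app, fold_left_app, IH by lia. apply sweep_site. lia.
Qed.

Theorem sweep_settled : sweep fuel L R = fun j => if j <? L then c j else settled L j.
Proof.
  unfold sweep, sites. rewrite sweep_prefix by lia.
  set (N := Z.to_nat (R - L + 1)).
  assert (HN : R < L + Z.of_nat N) by (unfold N; lia).
  apply functional_extensionality; intros j. unfold sweep_state.
  destruct (Z.ltb_spec j L); [reflexivity|].
  destruct (Z.ltb_spec j (L + Z.of_nat N)); [reflexivity|].
  unfold settled. destruct (Z.eqb_spec j (L + Z.of_nat N)) as [->|].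
  { rewrite no_balls_outside by lia. replace (Z.to_nat (L + Z.of_nat N - L)) with N by lia. lia. }
  rewrite greedy_fill_no_balls by (intros; apply no_balls_outside; lia).
  rewrite no_balls_outside by lia.
  replace (Z.to_nat (j - L)) with (S N + Z.to_nat (j - (L + Z.of_nat N) - 1))%nat by lia.
  rewrite carry_add. cbn [carry]. rewrite (no_balls_outside (L + Z.of_nat N)) by lia.
  rewrite !Nat.add_0_r, Nat.add_0_l. f_equal; [f_equal; lia|]. f_equal. lia.
Qed.
End Sweep.

Lemma settled_at_anchor c cap a : settled c cap a a = 0%nat.
Proof. unfold settled. rewrite Z.sub_diag. simpl. lia. Qed.

Lemma settled_reanchor c cap L a j :
  (forall j, j < L -> c j = 0%nat) -> (forall j, j < a -> c j = 0%nat) -> a <= j ->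
  (if j <? L then c j else settled c cap L j) = settled c cap a j.
Proof.
  intros HL Ha Hj. unfold settled. destruct (Z.ltb_spec j L).
  - rewrite HL by lia. rewrite carry_no_balls; [lia|]. intros i Hi. apply HL. lia.
  - f_equal. destruct (Z_le_gt_dec a L).
    + replace (Z.to_nat (j - a)) with (Z.to_nat (L - a) + Z.to_nat (j - L))%nat by lia.
      rewrite carry_add, (carry_no_balls c cap a) by (intros i Hi; apply HL; lia).
      f_equal. lia.
    + replace (Z.to_nat (j - L)) with (Z.to_nat (a - L) + Z.to_nat (j - a))%nat by lia.
      rewrite carry_add, (carry_no_balls c cap L) by (intros i Hi; apply Ha; lia).
      f_equal. lia.
Qed.

Lemma ball_total_sites c L R :
  fold_right (fun j acc => (c j + acc)%nat) 0%nat (sites L R) = ball_total c L (Z.to_nat (R - L + 1)).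
Proof.
  unfold sites. generalize (Z.to_nat (R - L + 1)) as N.
  enough (H : forall N s, fold_right (fun j acc => (c j + acc)%nat) 0%nat
             (map (fun n => L + Z.of_nat n) (seq s N)) = ball_total c (L + Z.of_nat s) N).
  { intros N. rewrite H. now rewrite Z.add_0_r. }
  induction N as [|N IH]; intros s; [reflexivity|].
  simpl. rewrite IH. do 2 f_equal. lia.
Qed.

Definition indicator (B : Z -> bool) (x : Z) : nat := if B x then 1%nat else 0%nat.

Lemma length_filter_sites B L R :
  length (filter B (sites L R)) = ball_total (indicator B) L (Z.to_nat (R - L + 1)).
Proof.
  rewrite <- ball_total_sites. induction (sites L R) as [|x l IH]; [reflexivity|].
  simpl. unfold indicator at 1. destruct (B x); simpl; lia.
Qed.

Definition bbs_step (B : Z -> bool) (fuel : nat) (cfg : Z -> bool) (x : Z) : Z -> bool :=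
  if B x then
    let cfg1 := upd cfg x false in
    match find_from (fun y => negb (cfg1 y)) (x + 1) fuel with
    | Some y => upd cfg1 y true
    | None => cfg1
    end
  else cfg.

Lemma bbs_step_move_ball B fuel cnt x : (forall y, (cnt y <= 1)%nat) ->
  let cnt' := Nat.iter (indicator B x) (fun z => move_ball (fun _ => 1%nat) fuel z x) cnt in
  (forall y, (cnt' y <= 1)%nat) /\
  bbs_step B fuel (fun y => Nat.eqb (cnt y) 1) x = (fun y => Nat.eqb (cnt' y) 1).
Proof.
  intros Hle cnt'. unfold cnt', bbs_step, indicator. destruct (B x); [|split; auto].
  simpl. unfold move_ball. cbv zeta.
  set (cnt1 := upd cnt x (pred (cnt x))).
  assert (Hle1 : forall y, (cnt1 y <= 1)%nat).
  { intros y; unfold cnt1, upd. destruct (y =? x); [specialize (Hle x)|specialize (Hle y)]; lia. }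
  assert (Hcfg1 : upd (fun y => Nat.eqb (cnt y) 1) x false = fun y => Nat.eqb (cnt1 y) 1).
  { apply functional_extensionality; intros y. unfold cnt1, upd.
    destruct (y =? x); [|reflexivity]. specialize (Hle x).
    destruct (cnt x) as [|[|]]; simpl; reflexivity || lia. }
  assert (Hfree : (fun y => negb (Nat.eqb (cnt1 y) 1)) = (fun k => Nat.ltb (cnt1 k) 1)).
  { apply functional_extensionality; intros y. specialize (Hle1 y).
    destruct (cnt1 y) as [|[|]]; simpl; reflexivity || lia. }
  rewrite Hcfg1, Hfree.
  destruct (find_from (fun k => Nat.ltb (cnt1 k) 1) (x + 1) fuel) as [y|] eqn:Ef; [|auto].
  apply find_from_true, Nat.ltb_lt in Ef. split.
  - intros z; unfold upd. destruct (z =? y); [lia|apply Hle1].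
  - apply functional_extensionality; intros z. unfold upd.
    destruct (z =? y); [|reflexivity]. now replace (cnt1 y) with 0%nat by lia.
Qed.

Lemma TBBS_w_sweep L R B :
  TBBS_w L R B = fun y => Nat.eqb (sweep (indicator B) (fun _ => 1%nat)
     (Z.to_nat (R - L) + 2 + length (filter B (sites L R)))%nat L R y) 1.
Proof.
  change (TBBS_w L R B) with (fold_left (bbs_step B (Z.to_nat (R - L) + 2 + length (filter B (sites L R))))
                                 (sites L R) B).
  unfold sweep. generalize (Z.to_nat (R - L) + 2 + length (filter B (sites L R)))%nat as fuel.
  intros fuel.
  enough (H : forall l cnt, (forall y, (cnt y <= 1)%nat) ->
    fold_left (bbs_step B fuel) l (fun y => Nat.eqb (cnt y) 1)
    = fun y => Nat.eqb (fold_left (fun cnt j => Nat.iter (indicator B j)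
                 (fun z => move_ball (fun _ => 1%nat) fuel z j) cnt) l cnt y) 1).
  { rewrite <- H by (intros y; unfold indicator; destruct (B y); lia). f_equal.
    apply functional_extensionality; intros y; unfold indicator; destruct (B y); reflexivity. }
  induction l as [|x l IH]; intros cnt Hle; [reflexivity|].
  destruct (bbs_step_move_ball B fuel cnt x Hle) as [Hle' Hstep].
  simpl. rewrite Hstep. apply IH, Hle'.
Qed.

Lemma TBBS_eq_settled B a x : is_bbs B -> (forall y, y < a -> B y = false) -> a <= x ->
  TBBS B x = Nat.eqb (settled (indicator B) (fun _ => 1%nat) a x) 1.
Proof.
  intros [L0 [R0 HB]] Hbelow Hx.
  assert (HW : forall y, B y = true -> fst (bbs_window B) <= y <= snd (bbs_window B)).
  { unfold bbs_window. apply epsilon_spec. now exists (L0, R0). }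
  set (Lb := fst (bbs_window B)) in HW. set (Rb := snd (bbs_window B)) in HW.
  assert (Hout : forall j, j < Lb \/ Rb < j -> indicator B j = 0%nat).
  { intros j Hj. unfold indicator. destruct (B j) eqn:E; [apply HW in E; lia|reflexivity]. }
  unfold TBBS. fold Lb Rb. rewrite TBBS_w_sweep, (sweep_settled (indicator B) (fun _ => 1%nat)).
  - rewrite (settled_reanchor _ _ Lb a x); [reflexivity| | |exact Hx].
    + intros j Hj. apply Hout. lia.
    + intros j Hj. unfold indicator. now rewrite Hbelow.
  - intros j; unfold indicator; destruct (B j); lia.
  - intros; lia.
  - exact Hout.
  - rewrite length_filter_sites. lia.
Qed.

Lemma Tinf_balls S i0 k : is_state S -> (forall j, j <= i0 -> S j = V) -> i0 <= k ->
  sc (Tinf S k) = settled (fun j => sc (S j)) (cap_after S) i0 k.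
Proof.
  intros [HV [N HN]] Hbef Hk.
  assert (HW : forall i, i < fst (bbbs_window S) \/ snd (bbbs_window S) < i -> S i = V).
  { unfold bbbs_window. apply epsilon_spec. exists (-N, N). simpl. intros i Hi. apply HN. lia. }
  set (L := fst (bbbs_window S)) in HW. set (R := snd (bbbs_window S)) in HW.
  assert (Hout : forall j, j < L \/ R < j -> sc (S j) = 0%nat) by (intros j Hj; now rewrite HW).
  change (sc (Tinf S k)) with (sweep (fun j => sc (S j)) (cap_after S)
    (Z.to_nat (R - L) + 2 + fold_right (fun j acc => (sc (S j) + acc)%nat) 0%nat (sites L R))%nat
    L R k).
  rewrite (sweep_settled (fun j => sc (S j)) (cap_after S)).
  - apply (settled_reanchor (fun j => sc (S j))); [| |exact Hk].
    + intros j Hj. apply Hout. lia.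
    + intros j Hj. now rewrite Hbef by lia.
  - intros j. pose proof (HV j). pose proof (HV (j - 1)). unfold valid_site in *.
    unfold cap_after, baskets_after, empty_baskets. lia.
  - intros; unfold cap_after; lia.
  - exact Hout.
  - rewrite ball_total_sites. lia.
Qed.

(* [cell_offset f i m]: first cell of site [i + m] when site [i] starts at
   cell 0 and site [k] occupies [f k + 1] cells. *)
Fixpoint cell_offset (f : Z -> nat) (i : Z) (m : nat) : nat :=
  match m with O => O | S m' => (f i + 1 + cell_offset f (i + 1) m')%nat end.

Lemma cell_offset_S (f : Z -> nat) (i : Z) (m : nat) : cell_offset f i (S m) = (cell_offset f i m + f (i + Z.of_nat m)%Z + 1)%nat.
Proof.
  revert i; induction m as [|m IH]; intros i; cbn [cell_offset] in *.
  - rewrite Z.add_0_r. lia.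
  - rewrite IH. replace (i + 1 + Z.of_nat m) with (i + Z.of_nat (S m)) by lia. lia.
Qed.

Lemma cell_offset_ge (f : Z -> nat) (i : Z) (m : nat) : (m <= cell_offset f i m)%nat.
Proof. revert i; induction m as [|m IH]; intros i; simpl; [lia|]. specialize (IH (i + 1)). lia. Qed.

Lemma cell_offset_mono (f : Z -> nat) (i : Z) (m m' : nat) : (m <= m')%nat -> (cell_offset f i m <= cell_offset f i m')%nat.
Proof. induction 1; [lia|]. rewrite cell_offset_S. lia. Qed.

Lemma cell_decompose (f : Z -> nat) i (x : nat) :
  exists m o, x = (cell_offset f i m + o)%nat /\ (o <= f (i + Z.of_nat m)%Z)%nat.
Proof.
  induction x as [|x (m & o & Hx & Ho)].
  - exists 0%nat, 0%nat. simpl. lia.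
  - destruct (Nat.eq_dec o (f (i + Z.of_nat m))).
    + exists (S m), 0%nat. rewrite cell_offset_S. lia.
    + exists m, (S o). lia.
Qed.

Lemma unb_r_cell (T : Z -> site) m i fuel o : (m < fuel)%nat ->
  (o <= sb (T (i + Z.of_nat m)%Z))%nat ->
  unb_r fuel T i (cell_offset (fun k => sb (T k)) i m + o) = Nat.ltb o (sc (T (i + Z.of_nat m))).
Proof.
  revert i fuel; induction m as [|m IH]; intros i [|fuel] Hfuel Ho; try lia.
  - simpl in *. rewrite Z.add_0_r in *.
    destruct (Nat.ltb_spec o (sb (T i) + 1)); [reflexivity|lia].
  - cbn [unb_r cell_offset].
    destruct (Nat.ltb_spec (sb (T i) + 1 + cell_offset (fun k => sb (T k)) (i + 1) m + o)
                (sb (T i) + 1)); [lia|].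
    replace (sb (T i) + 1 + cell_offset (fun k => sb (T k)) (i + 1) m + o - (sb (T i) + 1))%nat
      with (cell_offset (fun k => sb (T k)) (i + 1) m + o)%nat by lia.
    replace (i + Z.of_nat (S m)) with (i + 1 + Z.of_nat m) in * by lia.
    apply IH; lia.
Qed.

Lemma Unb_cell (T : Z -> site) i0 m o : (o <= sb (T (i0 + Z.of_nat m)%Z))%nat ->
  Unb i0 T (Z.of_nat (cell_offset (fun k => sb (T k)) i0 m + o)) = Nat.ltb o (sc (T (i0 + Z.of_nat m))).
Proof.
  intros Ho. unfold Unb.
  destruct (Z.leb_spec 0 (Z.of_nat (cell_offset (fun k => sb (T k)) i0 m + o))); [|lia].
  rewrite Nat2Z.id. apply unb_r_cell; [|assumption].
  pose proof (cell_offset_ge (fun k => sb (T k)) i0 m). lia.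
Qed.

Lemma unb_l_vacuum (T : Z -> site) fuel i n : (forall j, j <= i -> T j = V) -> unb_l fuel T i n = false.
Proof.
  revert i n; induction fuel as [|fuel IH]; intros i n H; [reflexivity|].
  simpl. rewrite (H i) by lia. simpl.
  destruct (Nat.ltb_spec n 1); [reflexivity|]. apply IH. intros; apply H; lia.
Qed.

Lemma Unb_neg (T : Z -> site) i0 x : (forall j, j < i0 -> T j = V) -> x < 0 -> Unb i0 T x = false.
Proof.
  intros H Hx. unfold Unb. destruct (Z.leb_spec 0 x); [lia|].
  apply unb_l_vacuum. intros; apply H; lia.
Qed.

Lemma Unb_is_bbs S i0 : is_state S -> (forall j, j <= i0 -> S j = V) -> is_bbs (Unb i0 S).
Proof.
  intros [_ [N HN]] Hbef.
  exists 0, (Z.of_nat (cell_offset (fun k => sb (S k)) i0 (Z.to_nat (N + 1 - i0)))).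
  intros x Hx. destruct (Z_lt_le_dec x 0).
  { rewrite Unb_neg in Hx by (try intros; try apply Hbef; lia). discriminate. }
  destruct (cell_decompose (fun k => sb (S k)) i0 (Z.to_nat x)) as (m & o & Hxm & Ho).
  replace x with (Z.of_nat (cell_offset (fun k => sb (S k)) i0 m + o)) in Hx |- * by lia.
  rewrite Unb_cell in Hx by assumption. apply Nat.ltb_lt in Hx.
  assert (Hm : Z.abs (i0 + Z.of_nat m) <= N).
  { destruct (Z_le_gt_dec (Z.abs (i0 + Z.of_nat m)) N); [assumption|].
    rewrite HN in Hx by lia. simpl in Hx. lia. }
  pose proof (cell_offset_mono (fun k => sb (S k)) i0 (Datatypes.S m) (Z.to_nat (N + 1 - i0)) ltac:(lia)).
  rewrite cell_offset_S in *. lia.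
Qed.

(* Cells [s], [s + 1], ... hold [e] empty cells, then [c] balls, then one more
   empty cell exactly when [c = 0]. *)
Definition block_pattern (cells : Z -> nat) (s : Z) (e c r : nat) : Prop :=
  (r + Nat.min c 1 = 1)%nat /\
  forall i, (i < e + c + r)%nat ->
    cells (s + Z.of_nat i) = if andb (Nat.leb e i) (Nat.ltb i (e + c)) then 1%nat else 0%nat.

Definition pattern_carry (e c M i : nat) : nat :=
  if Nat.leb i e then (M - i)%nat
  else if Nat.leb i (e + c) then (M - e + (i - e))%nat
  else (M - e + c - 1)%nat.

Lemma carry_through_pattern cells s e c r M : block_pattern cells s e c r ->
  forall i, (i <= e + c + r)%nat -> carry cells (fun _ => 1%nat) s M i = pattern_carry e c M i.
Proof.
  intros [Hr Hcells]. induction i as [|i IH]; intros Hi.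
  - unfold pattern_carry. simpl. lia.
  - cbn [carry]. rewrite IH by lia. unfold free. rewrite Hcells by lia. unfold pattern_carry.
    destruct (Nat.leb_spec i e); destruct (Nat.leb_spec (S i) e);
    destruct (Nat.leb_spec i (e + c)); destruct (Nat.leb_spec (S i) (e + c));
    destruct (Nat.leb_spec e i); destruct (Nat.ltb_spec i (e + c)); cbn [andb]; lia.
Qed.

Lemma settled_in_pattern cells s e c r M : block_pattern cells s e c r ->
  forall i, (i < e + c + r)%nat ->
  Nat.min (free cells (fun _ => 1%nat) (s + Z.of_nat i)) (pattern_carry e c M i) =
  if Nat.ltb i (Nat.min (e + r) M) then 1%nat else 0%nat.
Proof.
  intros [Hr Hcells] i Hi. unfold free. rewrite Hcells by lia. unfold pattern_carry.
  destruct (Nat.leb_spec i e); destruct (Nat.leb_spec i (e + c));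
  destruct (Nat.leb_spec e i); destruct (Nat.ltb_spec i (e + c));
  destruct (Nat.ltb_spec i (Nat.min (e + r) M)); cbn [andb]; lia.
Qed.

Section Unbasketing.
Variables (S : Z -> site) (i0 : Z).
Hypothesis valid : forall j, valid_site (S j).
Hypothesis vacuum_left : forall j, j <= i0 -> S j = V.

Let baskets k := sb (S k).
Let balls k := sc (S k).
Let leaving k := empty_baskets (S k).
Let new_baskets k := baskets_after S k.
(* 1 if the box of site [k] holds no ball, 0 otherwise *)
Let box_left k := (baskets k + 1 - leaving k - balls k)%nat.

Lemma site_shape k : (leaving k <= baskets k)%nat /\
  (balls k + leaving k <= baskets k + 1)%nat /\ (box_left k + Nat.min (balls k) 1 = 1)%nat.
Proof.
  pose proof (valid k). unfold valid_site in *.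
  unfold box_left, baskets, balls, leaving, empty_baskets. lia.
Qed.

Lemma free_after_move k :
  free balls (cap_after S) k = (leaving (k - 1) + box_left k)%nat.
Proof.
  pose proof (site_shape k).
  unfold free, cap_after, baskets_after, box_left, baskets, balls, leaving in *. lia.
Qed.

(* The new cells of site [k] start [leaving (k - 1)] cells earlier: the baskets
   that moved in from [k - 1] were its last cells. *)
Lemma cell_offset_shift n :
  (cell_offset new_baskets i0 n + leaving (i0 + Z.of_nat n - 1) = cell_offset baskets i0 n)%nat.
Proof.
  induction n as [|n IH].
  - simpl. unfold leaving. rewrite vacuum_left by lia. reflexivity.
  - rewrite !cell_offset_S.
    replace (i0 + Z.of_nat (Datatypes.S n) - 1) with (i0 + Z.of_nat n) by lia.
    pose proof (site_shape (i0 + Z.of_nat n)).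
    change (new_baskets (i0 + Z.of_nat n)) with (baskets (i0 + Z.of_nat n)
      - leaving (i0 + Z.of_nat n) + leaving (i0 + Z.of_nat n - 1))%nat.
    lia.
Qed.

Lemma new_block_pattern n : let k := i0 + Z.of_nat n in
  block_pattern (indicator (Unb i0 S)) (Z.of_nat (cell_offset new_baskets i0 n))
    (leaving (k - 1)) (balls k) (box_left k).
Proof.
  intros k. pose proof (cell_offset_shift n) as Hshift. fold k in Hshift.
  pose proof (site_shape k) as (Hlk & Hck & Hbox).
  split; [exact Hbox|]. intros o Ho.
  rewrite <- Nat2Z.inj_add. unfold indicator.
  destruct (Nat.ltb_spec o (leaving (k - 1))) as [Hlt|Hge].
  - destruct n as [|n].
    { unfold leaving in Hlt. rewrite vacuum_left in Hlt by (unfold k; lia). cbv in Hlt. lia. }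
    rewrite (cell_offset_S baskets) in Hshift.
    replace (i0 + Z.of_nat n) with (k - 1) in Hshift by (unfold k; lia).
    pose proof (site_shape (k - 1)) as (Hl' & Hc' & _).
    replace (cell_offset new_baskets i0 (Datatypes.S n) + o)%nat
      with (cell_offset baskets i0 n + (baskets (k - 1) + 1 - leaving (k - 1) + o))%nat by lia.
    rewrite (Unb_cell S i0 n); replace (i0 + Z.of_nat n) with (k - 1) by (unfold k; lia).
    + replace (Nat.ltb _ _) with false by (symmetry; apply Nat.ltb_ge; unfold balls in *; lia).
      replace (Nat.leb (leaving (k - 1)) o) with false by (symmetry; apply Nat.leb_gt; lia).
      reflexivity.
    + unfold baskets in *. lia.
  - replace (cell_offset new_baskets i0 n + o)%nat
      with (cell_offset baskets i0 n + (o - leaving (k - 1)))%nat by lia.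
    rewrite (Unb_cell S i0 n); fold k.
    + replace (Nat.leb (leaving (k - 1)) o) with true by (symmetry; apply Nat.leb_le; lia).
      fold (balls k). simpl.
      destruct (Nat.ltb_spec (o - leaving (k - 1)) (balls k));
        destruct (Nat.ltb_spec o (leaving (k - 1) + balls k)); lia.
    + unfold box_left, baskets in *. lia.
Qed.

Lemma carry_at_block_start n :
  carry (indicator (Unb i0 S)) (fun _ => 1%nat) 0 0 (cell_offset new_baskets i0 n)
  = carry balls (cap_after S) i0 0 n.
Proof.
  induction n as [|n IH]; [reflexivity|].
  pose proof (new_block_pattern n) as Hpat. cbv zeta in Hpat.
  set (k := i0 + Z.of_nat n) in Hpat |- *.
  pose proof (site_shape k) as Hshape.
  rewrite cell_offset_S. fold k.
  replace (cell_offset new_baskets i0 n + new_baskets k + 1)%nat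
    with (cell_offset new_baskets i0 n + (leaving (k - 1) + balls k + box_left k))%nat
    by (unfold new_baskets, baskets_after, box_left, baskets, balls, leaving in *; lia).
  rewrite carry_add, IH, Z.add_0_l, (carry_through_pattern _ _ _ _ _ _ Hpat) by lia.
  cbn [carry]. fold k. rewrite free_after_move. unfold pattern_carry.
  destruct (Nat.leb_spec (leaving (k - 1) + balls k + box_left k) (leaving (k - 1)));
    destruct (Nat.leb_spec (leaving (k - 1) + balls k + box_left k) (leaving (k - 1) + balls k));
    unfold balls in *; lia.
Qed.

Lemma settled_in_new_block m o : (o <= new_baskets (i0 + Z.of_nat m))%nat ->
  settled (indicator (Unb i0 S)) (fun _ => 1%nat) 0 (Z.of_nat (cell_offset new_baskets i0 m + o))
  = if Nat.ltb o (settled balls (cap_after S) i0 (i0 + Z.of_nat m)) then 1%nat else 0%nat.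
Proof.
  intros Ho. pose proof (new_block_pattern m) as Hpat. cbv zeta in Hpat.
  set (k := i0 + Z.of_nat m) in *.
  pose proof (site_shape k) as Hshape.
  assert (Ho' : (o < leaving (k - 1) + balls k + box_left k)%nat)
    by (unfold new_baskets, baskets_after, box_left, baskets, balls, leaving in *; lia).
  unfold settled.
  rewrite Z.sub_0_r, Nat2Z.id, carry_add, carry_at_block_start, Z.add_0_l,
    (carry_through_pattern _ _ _ _ _ _ Hpat), Nat2Z.inj_add by lia.
  replace (Z.to_nat (k - i0)) with m by (unfold k; lia).
  rewrite free_after_move.
  apply (settled_in_pattern _ _ _ _ _ _ Hpat); assumption.
Qed.
End Unbasketing.

Theorem mainTheorem4 (S : Z -> site) (HS : is_state S) (i0 : Z)
  (Hi0 : forall i, i <= i0 -> S i = V /\ Tinf S i = V) :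
  forall x : Z, Unb i0 (Tinf S) x = TBBS (Unb i0 S) x.
Proof.
  assert (Hbef : forall j, j <= i0 -> S j = V) by (intros j Hj; apply (Hi0 j Hj)).
  assert (Hvacuum : forall y, y < 0 -> Unb i0 S y = false)
    by (intros y Hy; apply Unb_neg; [intros; apply Hbef; lia|exact Hy]).
  pose proof HS as [Hvalid _]. pose proof (Unb_is_bbs S i0 HS Hbef) as Hbbs.
  intros x. destruct (Z_lt_le_dec x 0) as [Hneg|Hpos].
  - rewrite Unb_neg by (try intros j Hj; try apply Hi0; lia).
    rewrite (TBBS_eq_settled _ x x Hbbs), settled_at_anchor; [reflexivity| |lia].
    intros y Hy. apply Hvacuum. lia.
  - destruct (cell_decompose (fun k => sb (Tinf S k)) i0 (Z.to_nat x)) as (m & o & Hxm & Ho).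
    replace x with (Z.of_nat (cell_offset (fun k => sb (Tinf S k)) i0 m + o)) by lia.
    rewrite Unb_cell, (Tinf_balls S i0) by (assumption || lia).
    rewrite (TBBS_eq_settled _ 0 _ Hbbs Hvacuum) by lia.
    change (fun k => sb (Tinf S k)) with (fun k => baskets_after S k).
    rewrite (settled_in_new_block S i0 Hvalid Hbef m o Ho).
    now destruct (Nat.ltb _ _).
Qed.
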